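(* Let $U$ be a regular molecule and $k\ge-1$. If $U$ admits a $k$-layering, then $\mathcal M_kU$ is acyclic, hence $U$ admits a $k$-ordering.
   Context: All posets are finite; $y$ covers $x$ if $x<y$ with nothing strictly between. A finite poset is graded if for each $x$ all maximal covering chains descending from $x$ have the same length $\dim x$; $U_n$ denotes elements of dimension $n$. An oriented graded poset is a finite graded poset with a label $\pm$ on each covering pair; $\Delta^\alpha x$ ($\nabla^\alpha x$) is the set of elements covered by (covering) $x$ with label $\alpha$. For closed (downward closed) $U$, with $\mathrm{cl}$ downward closure, $\max U$ maximal elements, $\dim U$ maximal dimension: $\Delta^\alpha_nU=\{x\in U_n:\nabla^{-\alpha}x\cap U=\emptyset\}$, $\partial^\alpha_nU=\mathrm{cl}(\Delta^\alpha_nU)\cup\bigcup_{j<n}\mathrm{cl}((\max U)_j)$ ($\emptyset$ for $n<0$), $\partial_nU=\partial^-_nU\cup\partial^+_nU$, subscript omitted for $n=\dim U-1$; $\Delta^\alpha_kx:=\Delta^\alpha_k\mathrm{cl}\{x\}$. Maps are functions with $f(\partial^\alpha_n\mathrm{cl}\{x\})=\partial^\alpha_n\mathrm{cl}\{f(x)\}$; inclusions are injective maps. $U\#_kV$ is the pushout of $U\hookleftarrow\partial^+_kU\cong\partial^-_kV\hookrightarrow V$; for $U,V$ of equal dimension $n$ with $\partial U\cong\partial V$ compatibly with $\partial^\pm$, $U\Rightarrow V$ is that pushout with a new element $\top$ of dimension $n+1$, $\Delta^-\top=U_n$, $\Delta^+\top=V_n$. $U$ is round if $\partial^-_nU\cap\partial^+_nU=\partial_{n-1}U$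 for all $n<\dim U$. Regular molecules: smallest isomorphism-closed class containing the point, closed under $U\#_kV$ ($k<\min(\dim U,\dim V)$) and $U\Rightarrow V$ for round regular molecules of equal dimension; pasting is associative up to unique isomorphism. $\mathcal M_kU$: directed graph with vertices $\bigcup_{i>k}(\max U)_i$ and edge $x\to y$ iff $\Delta^+_kx\cap\Delta^-_ky\ne\emptyset$; a $k$-ordering is a topological sort of $\mathcal M_kU$ (when acyclic). For $-1\le k<\dim U$ and $m=|\bigcup_{i>k}(\max U)_i|$, a $k$-layering of $U$ is a sequence $(U^{(i)})_{i=1}^m$ of regular molecules with $\dim U^{(i)}>k$ and $U\cong U^{(1)}\#_k\cdots\#_kU^{(m)}$. *)

From mathcomp Require Import all_boot all_order all_algebra.
Set Implicit Arguments. Unset Strict Implicit. Unset Printing Implicit Defensive.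
Import Order.TTheory GRing.Theory Num.Theory.

(* An oriented graded poset, presented by its labelled covering relation:
   [ogcov x y] means "y covers x", and [ogsgn x y] is the label of that
   covering pair (true = +, false = -); [ogsgn] is only relevant on
   covering pairs. *)
Record ogp := OGP {
  ogT :> finType;
  ogcov : rel ogT;
  ogsgn : ogT -> ogT -> bool }.

Section OGPDefs.
Variable P : ogp.

Definition le (x y : P) : bool := connect (@ogcov P) x y.

(* length of the longest descending covering chain from x (fuel #|P|);
   in a graded poset this is dim x *)
Fixpoint height (f : nat) (x : P) : nat :=
  if f is f'.+1 then \max_(y : P | ogcov y x) (height f' y).+1 else 0.
Definition dimx (x : P) : nat := height #|P| x.

Definition cl (A : {set P}) : {set P} := [set x | [exists y in A, le x y]].
Definition maxs (A : {set P}) : {set P} :=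
  [set x in A | [forall y in A, le x y ==> (y == x)]].
Definition dimS (A : {set P}) : nat := \max_(x in A) dimx x.
Definition dimP : nat := dimS [set: P].

Definition Delta (a : bool) (n : int) (A : {set P}) : {set P} :=
  match n with
  | Posz m => [set x in A | (dimx x == m) &&
                 [forall y in A, ~~ (ogcov x y && (ogsgn x y == ~~ a))]]
  | Negz _ => set0
  end.

Definition bd (a : bool) (n : int) (A : {set P}) : {set P} :=
  match n with
  | Posz m => cl (Delta a m A) :|: cl [set x in maxs A | dimx x < m]
  | Negz _ => set0
  end.
Definition bd2 (n : int) (A : {set P}) : {set P} := bd false n A :|: bd true n A.

Definition round : Prop :=
  forall n : nat, n < dimP ->
    bd false n%:Z [set: P] :&: bd true n%:Z [set: P] = bd2 (n%:Z - 1)%R [set: P].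
End OGPDefs.

Definition embedding (P Q : ogp) (f : P -> Q) : Prop :=
  injective f /\
  forall x y, ogcov (f x) (f y) = ogcov x y /\
              (ogcov x y -> ogsgn (f x) (f y) = ogsgn x y).

Definition iso (P Q : ogp) : Prop :=
  exists f : P -> Q, bijective f /\
  forall x y, ogcov (f x) (f y) = ogcov x y /\
              (ogcov x y -> ogsgn (f x) (f y) = ogsgn x y).

(* W is (isomorphic to) the pasting U #_k V: the pushout of
   U <-< bd^+_k U ~= bd^-_k V >-> V, described by its two inclusions. *)
Definition is_paste (k : int) (U V W : ogp) : Prop :=
  exists (i : U -> W) (j : V -> W),
    embedding i /\ embedding j /\
    (forall z, (exists x, z = i x) \/ (exists y, z = j y)) /\
    (forall x y, i x = j y -> x \in bd true k [set: U] /\ y \in bd false k [set: V]) /\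
    (forall x, x \in bd true k [set: U] -> exists y, i x = j y) /\
    (forall y, y \in bd false k [set: V] -> exists x, i x = j y) /\
    (forall z w, ogcov z w ->
       (exists x x', [/\ z = i x, w = i x' & ogcov x x']) \/
       (exists y y', [/\ z = j y, w = j y' & ogcov y y'])).

(* W is (isomorphic to) U => V, for U, V of dimension n with bd U ~= bd V
   compatibly with bd^-, bd^+ *)
Definition is_cell (U V W : ogp) : Prop :=
  let n := dimP U in
  exists (top : W) (i : U -> W) (j : V -> W),
    embedding i /\ embedding j /\
    (forall x, i x <> top) /\ (forall y, j y <> top) /\
    (forall z, z <> top -> (exists x, z = i x) \/ (exists y, z = j y)) /\
    (forall x y, i x = j y ->
       [/\ x \in bd2 (n%:Z - 1)%R [set: U], y \in bd2 (n%:Z - 1)%R [set: V] &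
           forall a, (x \in bd a (n%:Z - 1)%R [set: U]) = (y \in bd a (n%:Z - 1)%R [set: V])]) /\
    (forall x, x \in bd2 (n%:Z - 1)%R [set: U] -> exists y, i x = j y) /\
    (forall y, y \in bd2 (n%:Z - 1)%R [set: V] -> exists x, i x = j y) /\
    (forall x, dimx x = n -> ogcov (i x) top /\ ogsgn (i x) top = false) /\
    (forall y, dimx y = n -> ogcov (j y) top /\ ogsgn (j y) top = true) /\
    (forall z w, ogcov z w ->
       (w = top /\ ((exists x, z = i x /\ dimx x = n) \/ (exists y, z = j y /\ dimx y = n))) \/
       (exists x x', [/\ z = i x, w = i x' & ogcov x x']) \/
       (exists y y', [/\ z = j y, w = j y' & ogcov y y'])).

(* regular molecules (closed under isomorphism by construction) *)
Inductive regular : ogp -> Prop :=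
| reg_point (P : ogp) : #|P| = 1 -> (forall x y : P, ~~ ogcov x y) -> regular P
| reg_paste (k : nat) (U V W : ogp) : regular U -> regular V ->
    k < dimP U -> k < dimP V -> is_paste k%:Z U V W -> regular W
| reg_cell (U V W : ogp) : regular U -> regular V -> round U -> round V ->
    dimP U = dimP V -> is_cell U V W -> regular W.

Fixpoint paste_seq (k : int) (s : seq ogp) (W : ogp) : Prop :=
  match s with
  | [::] => False
  | A :: s' => if s' is [::] then iso A W
               else exists W' : ogp, paste_seq k s' W' /\ is_paste k A W' W
  end.

Definition Mvert (U : ogp) (k : int) : {set U} :=
  [set x in maxs [set: U] | (k < (dimx x)%:Z)%R].

Definition layering (U : ogp) (k : int) (s : seq ogp) : Prop :=
  [/\ (-1 <= k)%R, (k < (dimP U)%:Z)%R,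
      size s = #|Mvert U k|,
      foldr (fun A Q => (regular A /\ (k < (dimP A)%:Z)%R) /\ Q) True s &
      paste_seq k s U].

Definition Medge (U : ogp) (k : int) (x y : U) : bool :=
  [&& x \in Mvert U k, y \in Mvert U k &
      Delta true k (cl [set x]) :&: Delta false k (cl [set y]) != set0].

Definition M_acyclic (U : ogp) (k : int) : Prop :=
  forall x y : U, Medge k x y -> ~~ connect (Medge k) y x.

Definition k_ordering (U : ogp) (k : int) (s : seq U) : Prop :=
  [/\ uniq s, (forall x, (x \in s) = (x \in Mvert U k)) &
      forall x y, Medge k x y -> index x s < index y s].

From mathcomp Require Import all_boot all_order all_algebra.
Set Implicit Arguments. Unset Strict Implicit. Unset Printing Implicit Defensive.

(* In a regular molecule the covering relation is acyclic, so [dimx] is the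
   height and is preserved by the inclusions of pastings.  A k-layering
   U = U_1 #_k ... #_k U_m cuts U into downward closed layers L_1, ..., L_m,
   where L_s meets a later L_t only inside the output k-boundary of L_s.  A
   maximal element of dimension > k lies in a single layer and every layer
   contains one; as there are m such elements, each layer contains exactly one.
   Suppose z lies in Delta^+_k x and in Delta^-_k y.  If y's layer were not
   later than x's, the element covering z on the way up to y would lie in y's
   layer and be an output of z, contradicting z in Delta^-_k y.  So the layer
   index strictly increases along the edges of M_k U, which is therefore
   acyclic, and sorting by it gives a k-ordering. *)

Lemma connect_ind (T : finType) (r : rel T) (Q : T -> T -> Prop) :
  (forall x, Q x x) -> (forall x y z, r x y -> Q y z -> Q x z) ->
  forall x y, connect r x y -> Q x y.
Proof.
move=> Qrefl Qstep x y /connectP[p]; elim: p x => [|w p IHp] x /=.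
  by move=> _ ->.
by move=> /andP[rxw pw] ey; apply: Qstep rxw (IHp _ pw ey).
Qed.

Lemma homo_connect (T : finType) (r : rel T) (f : T -> nat) :
  (forall x y, r x y -> f x <= f y) -> forall x y, connect r x y -> f x <= f y.
Proof. by move=> fr; apply: connect_ind => // x y z /fr; apply: leq_trans. Qed.

Lemma rank_acyclic (T : finType) (r : rel T) (f : T -> nat) :
  (forall x y, r x y -> f x < f y) -> forall x y, r x y -> ~~ connect r y x.
Proof.
move=> fr x y rxy; apply/negP => /(homo_connect (fun a b h => ltnW (fr a b h))).
by rewrite leqNgt fr.
Qed.

Lemma rank_topsort (T : finType) (A : {pred T}) (r : rel T) (f : T -> nat) :
  (forall x y, r x y -> f x < f y) ->
  exists s : seq T, [/\ uniq s, s =i A &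
    {in A &, forall x y, r x y -> index x s < index y s}].
Proof.
move=> fr; pose le_f := [rel x y | f x <= f y].
have le_f_refl : reflexive le_f by move=> ?; apply: leqnn.
have le_f_trans : transitive le_f by move=> ? ? ? /= /leq_trans; apply.
have s_sorted : sorted le_f (sort le_f (enum A)).
  by apply: sort_sorted => x y; apply: leq_total.
exists (sort le_f (enum A)); split=> [||x y Ax Ay rxy].
- by rewrite sort_uniq enum_uniq.
- by move=> x; rewrite mem_sort mem_enum.
rewrite ltnNge; apply/negP => /(sorted_leq_index le_f_trans le_f_refl s_sorted).
by rewrite !mem_sort !mem_enum /= leqNgt fr // => /(_ Ay Ax).
Qed.

Section OrientedGradedPoset.
Variable P : ogp.
Implicit Types x y z w : P.

Lemma le_refl x : le x x. Proof. exact: connect0. Qed.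
Lemma le_cov x y : ogcov x y -> le x y. Proof. exact: connect1. Qed.
Lemma le_trans x y z : le x y -> le y z -> le x z. Proof. exact: connect_trans. Qed.

Lemma le_cov_step x y : le x y -> x != y -> exists2 w, ogcov x w & le w y.
Proof.
move=> /connectP[[|w p]] /=; first by move=> _ ->; rewrite eqxx.
by move=> /andP[xw wp] -> _; exists w => //; apply/connectP; exists p.
Qed.

Lemma in_cl (A : {set P}) z : (z \in cl A) = [exists y in A, le z y].
Proof. by rewrite inE. Qed.

Lemma cl_le (A : {set P}) z w : le z w -> w \in cl A -> z \in cl A.
Proof.
move=> zw; rewrite !in_cl => /existsP[y /andP[yA wy]].
by apply/existsP; exists y; rewrite yA (le_trans zw wy).
Qed.

Lemma bd_le a k (A : {set P}) z w : le z w -> w \in bd a k A -> z \in bd a k A.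
Proof.
case: k => [m|m] zw; last by rewrite inE.
by rewrite /bd !in_setU => /orP[] /(cl_le zw) ->; rewrite ?orbT.
Qed.

Lemma bd2_le k (A : {set P}) z w : le z w -> w \in bd2 k A -> z \in bd2 k A.
Proof. by move=> zw; rewrite !in_setU => /orP[] /(bd_le zw) ->; rewrite ?orbT. Qed.

Lemma Delta_dimx a n (A : {set P}) z : z \in Delta a (Posz n) A -> dimx z = n.
Proof. by rewrite inE => /and3P[_ /eqP]. Qed.

Lemma Delta_sub a n (A : {set P}) z : z \in Delta a (Posz n) A -> z \in A.
Proof. by rewrite inE => /andP[]. Qed.

Lemma Delta_sgn a n (A : {set P}) z w :
  z \in Delta a (Posz n) A -> w \in A -> ogcov z w -> ogsgn z w = a.
Proof.
rewrite inE => /and3P[_ _ /forallP/(_ w)] + wA zw; rewrite wA zw /=.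
by case: (ogsgn z w); case: (a).
Qed.

Lemma in_cl1 x z : (z \in cl [set x]) = le z x.
Proof.
rewrite in_cl; apply/existsP/idP => [[_ /andP[/set1P-> //]] | zx].
by exists x; rewrite set11.
Qed.
End OrientedGradedPoset.

Definition acyclic_cov (P : ogp) : Prop := forall x y : P, ogcov x y -> ~~ le y x.

Section Dimension.
Variable P : ogp.
Hypothesis acP : acyclic_cov P.
Implicit Types x y z : P.

Definition below x : {set P} := [set z | [exists y, ogcov y x && le z y]].

Lemma notin_below x : x \notin below x.
Proof. by rewrite inE; apply/existsP => -[y /andP[/acP/negP]]. Qed.

Lemma heightS f x : height f.+1 x = \max_(y | ogcov y x) (height f y).+1.
Proof. by []. Qed.

Lemma height_le_below f x : height f x <= #|below x|.
Proof.
elim: f x => [|f IHf] x //=; apply/bigmax_leqP => y yx.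
apply: leq_ltn_trans (IHf y) (proper_card _); apply/properP; split.
  apply/subsetP => z; rewrite !inE => /existsP[y' /andP[y'y zy']].
  by apply/existsP; exists y; rewrite yx (le_trans zy' (le_cov y'y)).
exists y; last exact: notin_below.
by rewrite inE; apply/existsP; exists y; rewrite yx le_refl.
Qed.

Lemma height_lt_card f x : height f x < #|P|.
Proof.
apply: leq_ltn_trans (height_le_below f x) _; rewrite -cardsT.
apply: proper_card; apply/properP; split; first exact: subsetT.
by exists x; [rewrite inE | exact: notin_below].
Qed.

Lemma height_stable f x : height f x < f -> height f.+1 x = height f x.
Proof.
elim: f x => [|f IHf] x //; rewrite !heightS => /bigmax_leqP hx.
by apply: eq_bigr => y yx; rewrite IHf // hx.
Qed.

Lemma height_dimx d x : #|P| <= d -> height d x = dimx x.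
Proof.
move=> /subnKC <-; elim: (d - #|P|) => [|e IHe]; first by rewrite addn0.
rewrite addnS height_stable IHe //.
by apply: leq_trans (height_lt_card _ x) (leq_addr _ _).
Qed.

Lemma dimx_cov y x : ogcov y x -> dimx y < dimx x.
Proof.
move=> yx; rewrite -(height_dimx x (leqnSn #|P|)) heightS.
exact: (@leq_bigmax_cond _ (fun z => ogcov z x) (fun z => (height #|P| z).+1) y yx).
Qed.

Lemma dimx_le y x : le y x -> dimx y <= dimx x.
Proof. by apply: homo_connect => a b /dimx_cov /ltnW. Qed.

Lemma dimx_lt y x : le y x -> y != x -> dimx y < dimx x.
Proof. by move=> /le_cov_step H /H[w /dimx_cov yw /dimx_le]; apply: leq_trans. Qed.

Lemma bd_dimx a n z : z \in bd a (Posz n) [set: P] ->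
  dimx z <= n /\ (dimx z = n -> z \in Delta a n [set: P]).
Proof.
rewrite /bd in_setU !in_cl => /orP[] /existsP[d /andP[dD zd]].
  have dn := Delta_dimx dD; split=> [|zn]; first by rewrite -dn dimx_le.
  by case: (eqVneq z d) => [-> // | /(dimx_lt zd)]; rewrite dn zn ltnn.
move: dD; rewrite inE => /andP[_ dn]; have zn := leq_ltn_trans (dimx_le zd) dn.
by split=> [|zdim]; [apply: ltnW | move: zn; rewrite zdim ltnn].
Qed.

Lemma exists_max_above x : exists2 u, le x u & u \in maxs [set: P].
Proof.
have [u xu umax] := @arg_maxnP P x (le x) (@dimx P) (le_refl x).
exists u; rewrite // inE in_setT; apply/forall_inP => v _; apply/implyP => uv.
have /= vu := umax v (le_trans xu uv).
by apply/contraT; rewrite eq_sym => /(dimx_lt uv); rewrite ltnNge vu.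
Qed.
End Dimension.

Lemma exists_dimx_gt (A : ogp) n : n < dimP A -> exists a : A, n < dimx a.
Proof.
case: (pickP (fun a : A => n < dimx a)) => [a an _ | none]; first by exists a.
by rewrite ltnNge => /negP[]; apply/bigmax_leqP => a _; rewrite leqNgt none.
Qed.

Definition closed_image (P Q : ogp) (e : P -> Q) : Prop :=
  forall z a, ogcov z (e a) -> exists b, z = e b.

Section Embedding.
Variables (P Q : ogp) (e : P -> Q).
Hypothesis emb_e : embedding e.

Lemma emb_inj : injective e. Proof. by case: emb_e. Qed.

Lemma emb_cov x y : ogcov (e x) (e y) = ogcov x y.
Proof. by case: emb_e => _ /(_ x y)[]. Qed.

Lemma emb_sgn x y : ogcov x y -> ogsgn (e x) (e y) = ogsgn x y.
Proof. by case: emb_e => _ /(_ x y)[]. Qed.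

Lemma emb_le x y : le x y -> le (e x) (e y).
Proof.
apply: (connect_ind (Q := fun x y => le (e x) (e y))) => [x' | x' y' z' xy].
  exact: le_refl.
by apply: le_trans; apply: le_cov; rewrite emb_cov.
Qed.

Lemma emb_acyclic : acyclic_cov Q -> acyclic_cov P.
Proof. by move=> acQ x y; rewrite -emb_cov => /acQ; apply: contra; apply: emb_le. Qed.

Hypothesis closed_e : closed_image e.

Lemma closed_image_le z a : le z (e a) -> exists2 b, z = e b & le b a.
Proof.
move=> /(connect_ind (Q := fun z w => forall a, w = e a -> exists2 b, z = e b & le b a)).
apply=> // [x a' -> | x y w xy IHy a' wa]; first by exists a'; rewrite ?le_refl.
have [b' yb ba] := IHy a' wa; rewrite yb in xy.
have [b xb] := closed_e xy; exists b => //; apply: le_trans ba; apply: le_cov.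
by rewrite -emb_cov -xb.
Qed.

Lemma closed_image_height f a : height f (e a) = height f a.
Proof.
elim: f a => [|f IHf] a //; rewrite !heightS; apply/eqP; rewrite eqn_leq.
apply/andP; split; apply/bigmax_leqP => y ya.
  have [b yb] := closed_e ya; rewrite yb IHf in ya *.
  apply: (@leq_bigmax_cond _ (fun z => ogcov z a) (fun z => (height f z).+1)).
  by rewrite -emb_cov.
rewrite -IHf; apply: (@leq_bigmax_cond _ (fun z => ogcov z (e a)) (fun z => (height f z).+1)).
by rewrite emb_cov.
Qed.

Lemma closed_image_dimx : acyclic_cov Q -> forall a, dimx (e a) = dimx a.
Proof.
move=> acQ a; rewrite /dimx closed_image_height height_dimx //; first exact: emb_acyclic.
exact: leq_card emb_inj.
Qed.

Lemma closed_image_acyclic_at : acyclic_cov P -> forall x w, ogcov (e x) w -> ~~ le w (e x).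
Proof.
move=> acP x w xw; apply/negP => /closed_image_le[y wy yx]; rewrite wy emb_cov in xw.
by move: (acP _ _ xw); rewrite yx.
Qed.
End Embedding.

Lemma acyclic_closed_cover (P Q W : ogp) (i : P -> W) (j : Q -> W) :
  embedding i -> embedding j -> closed_image i -> closed_image j ->
  acyclic_cov P -> acyclic_cov Q ->
  (forall z w, ogcov z w -> (exists x, z = i x) \/ (exists y, z = j y)) ->
  acyclic_cov W.
Proof.
move=> ei ej ci cj acP acQ cover z w zw.
by case: (cover _ _ zw) => -[x zx]; rewrite zx in zw *; apply: closed_image_acyclic_at zw.
Qed.

Lemma is_paste_closed k (U V W : ogp) : is_paste k U V W ->
  exists (i : U -> W) (j : V -> W),
  [/\ embedding i, embedding j, closed_image i, closed_image j &
      forall z, (exists x, z = i x) \/ (exists y, z = j y)] /\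
  forall x y, i x = j y -> x \in bd true k [set: U].
Proof.
move=> [i [j [ei [ej [cover [glue [fromU [fromV cov]]]]]]]].
exists i, j; split=> [|x y /glue[] //]; split=> // z a /cov.
- case=> [[x [x' [-> /(emb_inj ei) <- _]]] | [y [y' [-> iay' yy']]]]; first by exists x.
  have [_ /(bd_le (le_cov yy'))/fromV[x xy]] := glue _ _ iay'; by exists x.
- case=> [[x [x' [-> ix'a xx']]] | [y [y' [-> /(emb_inj ej) <- _]]]]; last by exists y.
  have [/(bd_le (le_cov xx'))/fromU[y xy] _] := glue _ _ (esym ix'a); by exists y.
Qed.

Lemma is_cell_closed (U V W : ogp) : is_cell U V W ->
  exists (i : U -> W) (j : V -> W),
  [/\ embedding i, embedding j, closed_image i, closed_image j &
      forall z w, ogcov z w -> (exists x, z = i x) \/ (exists y, z = j y)].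
Proof.
move=> [top [i [j [ei [ej [itop [jtop [_ [glue [fromU [fromV [_ [_ cov]]]]]]]]]]]]].
exists i, j; split=> // [z a /cov | z a /cov | z w /cov].
- case=> [[/itop //] | [[x [x' [-> /(emb_inj ei) <- _]]] | [y [y' [-> iay' yy']]]]].
    by exists x.
  have [_ /(bd2_le (le_cov yy'))/fromV[x xy] _] := glue _ _ iay'; by exists x.
- case=> [[/jtop //] | [[x [x' [-> ix'a xx']]] | [y [y' [-> /(emb_inj ej) <- _]]]]].
    have [/(bd2_le (le_cov xx'))/fromU[y xy] _ _] := glue _ _ (esym ix'a); by exists y.
  by exists y.
- by case=> [[_ [[x [-> _]] | [y [-> _]]]] | [[x [? [-> _ _]]] | [y [? [-> _ _]]]]];
    [left; exists x | right; exists y | left; exists x | right; exists y].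
Qed.

Lemma regular_acyclic (U : ogp) : regular U -> acyclic_cov U.
Proof.
elim=> {U} [P _ nocov x y | k U V W _ acU _ acV _ _ | U V W _ acU _ acV _ _ _].
- by rewrite (negbTE (nocov x y)).
- move=> /is_paste_closed[i [j [[ei ej ci cj cover] _]]].
  by apply: (acyclic_closed_cover ei ej ci cj acU acV) => z _ _; apply: cover.
- move=> /is_cell_closed[i [j [ei ej ci cj cover]]].
  exact: (acyclic_closed_cover ei ej ci cj acU acV).
Qed.

(* [L t] is the image of the [t]-th factor of a [k]-layering; the two [layer_meet]
   fields say that an earlier layer meets a later one inside its output [k]-boundary. *)
Record layers (W : ogp) (k m : nat) (L : nat -> {set W}) : Prop := Layers {
  layer_closed : forall t z w, ogcov z w -> w \in L t -> z \in L t;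
  layer_cover : forall z, exists2 t, t < m & z \in L t;
  layer_meet_dimx : forall t t' z, t < t' < m -> z \in L t -> z \in L t' -> dimx z <= k;
  layer_meet_out : forall t t' z w, t < t' < m -> z \in L t -> z \in L t' ->
    dimx z = k -> w \in L t -> ogcov z w -> ogsgn z w;
  layer_tall : forall t, t < m -> exists2 a, a \in L t & k < dimx a }.

Lemma layers_iso (A W : ogp) k : acyclic_cov W -> k < dimP A -> iso A W ->
  layers k 1 (fun _ => [set: W]).
Proof.
move=> acW kA [f [bij_f fcov]].
have ef : embedding f by split=> //; apply: bij_inj.
have cf : closed_image f by case: bij_f => g _ gK z a _; exists (g z); rewrite gK.
split=> [t z w _ _ | z | t t' z /andP[/leq_ltn_trans/[apply] //] |
         t t' z w /andP[/leq_ltn_trans/[apply] //] | [|t] // _]; rewrite ?inE //.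
  by exists 0.
have [a ka] := exists_dimx_gt kA; exists (f a); first by rewrite inE.
by rewrite (closed_image_dimx ef cf acW).
Qed.

Section PasteLayers.
Variables (A V W : ogp) (i : A -> W) (j : V -> W) (k m : nat) (L : nat -> {set V}).
Hypotheses (ei : embedding i) (ej : embedding j).
Hypotheses (ci : closed_image i) (cj : closed_image j).
Hypothesis cover : forall z, (exists x, z = i x) \/ (exists y, z = j y).
Hypothesis glue : forall x y, i x = j y -> x \in bd true k [set: A].
Hypotheses (acW : acyclic_cov W) (kA : k < dimP A) (layL : layers k m L).

Definition paste_layers (t : nat) : {set W} :=
  if t is t'.+1 then j @: L t' else i @: [set: A].

Lemma paste_layers_closed t z w : ogcov z w -> w \in paste_layers t -> z \in paste_layers t.
Proof.
case: t => [|t] zw /imsetP[a aL wa]; rewrite wa in zw.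
  by have [b ->] := ci zw; rewrite imset_f ?inE.
have [b zb] := cj zw; rewrite zb emb_cov // in zw; rewrite zb imset_f //.
exact: layer_closed layL _ _ _ zw aL.
Qed.

Lemma paste_layers_meet0 t z : z \in paste_layers 0 -> z \in paste_layers t.+1 ->
  dimx z <= k /\ (dimx z = k -> forall w, w \in paste_layers 0 -> ogcov z w -> ogsgn z w).
Proof.
move=> /imsetP[a _ ->] /imsetP[b _ /glue ak].
have acA : acyclic_cov A := emb_acyclic ei acW.
have [ak_dim ak_out] := bd_dimx acA ak; rewrite (closed_image_dimx ei ci acW).
split=> // /ak_out aD _ /imsetP[a' _ ->]; rewrite emb_cov // => aa'.
by rewrite emb_sgn // (Delta_sgn aD _ aa') ?inE.
Qed.

Lemma layers_paste : layers k m.+1 paste_layers.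
Proof.
split=> [|z | [|t] [|t'] // z | [|t] [|t'] // z w | [|t] tm].
- exact: paste_layers_closed.
- case: (cover z) => -[x ->]; first by exists 0; rewrite // imset_f ?inE.
  by have [t tm xL] := layer_cover layL x; exists t.+1; rewrite // imset_f.
- by move=> _ /paste_layers_meet0 H /H[].
- move=> /= tt' /imsetP[x xL ->] /imsetP[y yL /(emb_inj ej) xy].
  by rewrite (closed_image_dimx ej cj acW) (layer_meet_dimx layL tt' xL) ?xy.
- by move=> _ /paste_layers_meet0 H /H[_ out] /out; apply.
- move=> /= tt' /imsetP[x xL ->] /imsetP[y yL /(emb_inj ej) xy].
  rewrite (closed_image_dimx ej cj acW) => xk /imsetP[x' x'L ->].
  rewrite (emb_cov ej) => xx'; rewrite (emb_sgn ej xx').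
  by apply: (layer_meet_out layL tt' xL _ xk x'L xx'); rewrite xy.
- have [a ka] := exists_dimx_gt kA; exists (i a); first by rewrite imset_f ?inE.
  by rewrite (closed_image_dimx ei ci acW).
- have [x xL kx] := layer_tall layL tm; exists (j x); first by rewrite imset_f.
  by rewrite (closed_image_dimx ej cj acW).
Qed.
End PasteLayers.

Lemma paste_seq_layers k s (W : ogp) : acyclic_cov W -> paste_seq (Posz k) s W ->
  foldr (fun A Q => (regular A /\ (Posz k < (dimP A)%:Z)%R) /\ Q) True s ->
  exists L : nat -> {set W}, layers k (size s) L.
Proof.
elim: s W => [|A [|B s] IHs] W acW //=; rewrite ltz_nat.
  by move=> isoAW [[_ kA] _]; exists (fun _ => [set: W]); apply: layers_iso isoAW.
move=> [W' [sW' /is_paste_closed[i [j [[ei ej ci cj cover] glue]]]]] [[_ kA] fs].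
have [L layL] := IHs W' (emb_acyclic ej acW) sW' fs.
by exists (paste_layers i j L); apply: layers_paste.
Qed.

Section LayerRank.
Variables (W : ogp) (k : nat) (L : nat -> {set W}).
Hypotheses (acW : acyclic_cov W) (layL : layers k #|Mvert W k| L).
Local Notation m := #|Mvert W k|.

Definition layer_of (x : W) : nat := find (fun t => x \in L t) (iota 0 m).

Lemma layer_closed_le t z w : le z w -> w \in L t -> z \in L t.
Proof.
move: z w; apply: (connect_ind (Q := fun z w => w \in L t -> z \in L t)) => // x y z xy yz.
by move/yz; apply: layer_closed layL _ _ _ xy.
Qed.

Lemma Mvert_dimx x : x \in Mvert W k -> k < dimx x.
Proof. by rewrite inE => /andP[_]; rewrite ltz_nat. Qed.

Lemma layer_unique x t t' : k < dimx x -> t < m -> t' < m ->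
  x \in L t -> x \in L t' -> t = t'.
Proof.
move=> kx tm t'm xt xt'; move: kx; rewrite ltnNge; apply: contraNeq.
case: (ltngtP t t') => [tt' | t't | //] _.
  by apply: (layer_meet_dimx layL _ xt xt'); rewrite tt' t'm.
by apply: (layer_meet_dimx layL _ xt' xt); rewrite t't tm.
Qed.

Lemma layer_ofP x : layer_of x < m /\ x \in L (layer_of x).
Proof.
have [t tm xt] := layer_cover layL x.
have has_x : has (fun t => x \in L t) (iota 0 m).
  by apply/hasP; exists t; [rewrite mem_iota add0n tm | exact: xt].
have := nth_find 0 has_x; rewrite has_find size_iota in has_x.
by rewrite (nth_iota 0 0 has_x) add0n.
Qed.

Lemma layer_of_onto t : t < m -> exists2 u, u \in Mvert W k & layer_of u = t.
Proof.
move=> tm; have [a aL ka] := layer_tall layL tm.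
have [u au umax] := exists_max_above acW a; have ku := leq_trans ka (dimx_le acW au).
exists u; first by rewrite inE umax ltz_nat ku.
have [um uL] := layer_ofP u.
exact: esym (layer_unique ka tm um aL (layer_closed_le au uL)).
Qed.

Lemma layer_of_inj : {in Mvert W k &, injective layer_of}.
Proof.
apply/dinjectiveP; apply: (leq_size_uniq (iota_uniq 0 m)).
  move=> t; rewrite mem_iota add0n => /layer_of_onto[u uV <-].
  by apply: map_f; rewrite mem_enum.
by rewrite size_map size_iota -cardE.
Qed.

Lemma Medge_layer_lt x y : Medge k x y -> layer_of x < layer_of y.
Proof.
move=> /and3P[xV yV /set0Pn[z]]; rewrite inE => /andP[zx zy].
have zk := Delta_dimx zx.
have zlex : le z x by rewrite -in_cl1 (Delta_sub zx).
have zley : le z y by rewrite -in_cl1 (Delta_sub zy).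
have [[xm xL] [ym yL]] := (layer_ofP x, layer_ofP y).
have z_ne_y : z != y.
  by apply: (contraTneq _ (Mvert_dimx yV)) => <-; rewrite zk ltnn.
have [w zw wy] := le_cov_step zley z_ne_y.
have wy' : w \in cl [set y] by rewrite in_cl1.
have out_zw : layer_of y <= layer_of x -> ogsgn z w.
  rewrite leq_eqVlt => /orP[/eqP/esym/(layer_of_inj xV yV) xy | yx].
    by rewrite xy in zx; rewrite (Delta_sgn zx wy' zw).
  have zLy := layer_closed_le zley yL; have zLx := layer_closed_le zlex xL.
  have yxm : layer_of y < layer_of x < m by rewrite yx xm.
  exact: (layer_meet_out layL yxm zLy zLx zk (layer_closed_le wy yL) zw).
by rewrite ltnNge; apply/negP => /out_zw; rewrite (Delta_sgn zy wy' zw).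
Qed.
End LayerRank.

Lemma layering_rank (U : ogp) k s : regular U -> layering U k s ->
  exists f : U -> nat, forall x y, Medge k x y -> f x < f y.
Proof.
move=> /regular_acyclic acU [_ _ sizes fs pastes]; case: k sizes fs pastes => k; last first.
  by move=> *; exists (fun=> 0) => x y; rewrite /Medge /Delta set0I eqxx !andbF.
move=> sizes fs /(paste_seq_layers acU)/(_ fs)[L]; rewrite sizes => layL.
by exists (layer_of k L); apply: Medge_layer_lt.
Qed.

Theorem proposition3p11 (U : ogp) (k : int) :
  regular U -> (-1 <= k)%R ->
  (exists s : seq ogp, layering U k s) ->
  M_acyclic U k /\ exists s : seq U, k_ordering k s.
Proof.
move=> regU _ [s /(layering_rank regU)[f Mf]].
have [t [t_uniq t_mem t_sorted]] := rank_topsort (mem (Mvert U k)) Mf.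
split; first exact: rank_acyclic Mf.
exists t; split=> // x y xy; have /and3P[xV yV _] := xy.
exact: t_sorted.
Qed.
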